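(* Let $X,Y$ be Banach spaces and let $Z$ be a $1$-complemented subspace of $Y$ (so $X\widehat{\otimes}_\pi Z$ is naturally a subspace of $X\widehat{\otimes}_\pi Y$). Then $(X\widehat{\otimes}_\pi Z)\cap\mathrm{INA}_\pi(X\widehat{\otimes}_\pi Y)=\mathrm{INA}_\pi(X\widehat{\otimes}_\pi Z)$.
   Context: A subspace $Z\subseteq Y$ is $1$-complemented if there is a bounded linear projection $P:Y\to Z$ with $\|P\|=1$. Definition: $u\in X\widehat{\otimes}_\pi Y$ is an integral projective norm-attaining tensor, written $u\in\mathrm{INA}_\pi(X\widehat{\otimes}_\pi Y)$, if there is a finite positive Borel measure $\mu$ on $B_X\times B_Y$ (norm topology) such that $\varphi:B_X\times B_Y\to X\widehat{\otimes}_\pi Y$, $\varphi(x,y)=x\otimes y$, is $\mu$-Bochner integrable, $u=\int_{B_X\times B_Y}x\otimes y\,d\mu(x,y)$ (Bochner integral) and $\|\mu\|=\|u\|_\pi$; then $u$ is said to be witnessed by $\mu$. *)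

From HB Require Import structures.
From mathcomp Require Import all_boot all_order all_algebra.
From mathcomp Require Import all_classical all_reals all_analysis.
Set Implicit Arguments. Unset Strict Implicit. Unset Printing Implicit Defensive.
Import Order.TTheory GRing.Theory Num.Theory.
Import numFieldNormedType.Exports.
Local Open Scope classical_set_scope.
Local Open Scope ring_scope.

(* Projective tensor products X \hat\otimes_pi S (S a linear subspace of Y,
   S = setT giving X \hat\otimes_pi Y) are handled through representations
   u = sum_n x_n (x) y_n with y_n in S and sum_n ||x_n|| ||y_n|| < oo,
   an element being identified with its action on the dual
   (X \hat\otimes_pi S)^* = bounded bilinear forms on X x S. *)
Section ProjTensor.
Context {R : realType} {X Y : normedModType R}.

Definition bilin (B : X -> Y -> R) :=
  (forall y a x1 x2, B (a *: x1 + x2) y = a * B x1 y + B x2 y) /\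
  (forall x a y1 y2, B x (a *: y1 + y2) = a * B x y1 + B x y2).

Definition bform (S : set Y) (B : X -> Y -> R) :=
  bilin B /\ exists C : R, forall x y, S y -> `|B x y| <= C * `|x| * `|y|.

(* a formal representation sum_n (r n).1 (x) (r n).2 *)
Definition trep := nat -> (X * Y)%type.

Definition rep_in (S : set Y) (r : trep) :=
  (forall n, S (r n).2) /\ cvgn (series (fun n => `|(r n).1| * `|(r n).2|)).

Definition rep_cost (r : trep) : R :=
  limn (series (fun n => `|(r n).1| * `|(r n).2|)).

Definition rep_ev (B : X -> Y -> R) (r : trep) : R :=
  limn (series (fun n => B (r n).1 (r n).2)).

Definition tens_of (r : trep) : (X -> Y -> R) -> R := fun B => rep_ev B r.

Definition represents (S : set Y) (r : trep) (F : (X -> Y -> R) -> R) :=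
  rep_in S r /\ forall B, bform S B -> rep_ev B r = F B.

Definition tnorm (S : set Y) (F : (X -> Y -> R) -> R) : R :=
  inf (rep_cost @` [set r | represents S r F]).

Definition is_tensor (S : set Y) F := exists r, represents S r F.

Notation BT := (g_sigma_algebraType (@open (X * Y)%type)).

Definition ballD (S : set Y) : set BT :=
  [set p | `|p.1| <= 1 /\ `|p.2| <= 1 /\ S p.2].

(* simple functions B_X x B_S -> X \hat\otimes_pi S:
   t |-> sum_i 1_{A_i}(t) c_i, A_i Borel, c_i in X \hat\otimes_pi S *)
Definition simple_ok (S : set Y) (s : seq (set BT * trep)) :=
  forall c, c \in s -> measurable c.1 /\ rep_in S c.2.

Definition sf_val (s : seq (set BT * trep)) (t : BT) : (X -> Y -> R) -> R :=
  fun B => \sum_(c <- s) (\1_(c.1) t * rep_ev B c.2).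

Definition sf_int (mu : {finite_measure set BT -> \bar R})
  (s : seq (set BT * trep)) : (X -> Y -> R) -> R :=
  fun B => \sum_(c <- s) (fine (mu c.1) * rep_ev B c.2).

Definition elem (t : BT) : (X -> Y -> R) -> R := fun B => B t.1 t.2.

(* phi is Bochner integrable on B_X x B_S w.r.t. mu with Bochner integral
   (the tensor) F : there are simple s_k with
   int ||s_k - phi||_pi dmu -> 0, and F = lim int s_k in ||.||_pi. *)
Definition bochner_int (S : set Y) (mu : {finite_measure set BT -> \bar R})
    (F : (X -> Y -> R) -> R) :=
  exists s : nat -> seq (set BT * trep),
    (forall k, simple_ok S (s k)) /\
    (forall k, measurable_fun (ballD S)
        (fun t : BT => tnorm S (fun B => sf_val (s k) t B - elem t B))) /\
    ((fun k => (\int[mu]_(t in ballD S)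
        (tnorm S (fun B => sf_val (s k) t B - elem t B))%:E)%E) @ \oo --> 0%E) /\
    ((fun k => tnorm S (fun B => sf_int mu (s k) B - F B)) @ \oo --> (0 : R)).

Definition INA (S : set Y) (F : (X -> Y -> R) -> R) :=
  is_tensor S F /\
  exists mu : {finite_measure set BT -> \bar R},
    mu (~` ballD S) = 0%E /\
    mu setT = (tnorm S F)%:E /\
    bochner_int S mu F.

End ProjTensor.

(* The projective norm of a tensor u of X (x) Z is the same in X (x) Z and in
   X (x) Y, because id (x) P is a norm-one projection of X (x) Y onto X (x) Z.
   Hence a measure witnessing u in INA(X (x) Z) also witnesses u in INA(X (x) Y).
   Conversely, let mu on B_X x B_Y witness u in INA(X (x) Y), with simple
   functions s_k approximating phi(x, y) = x (x) y.  Push mu forward along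
   (x, y) |-> (x, P y): the image lives on B_X x B_Z and keeps the total mass
   ||u||.  The maps (id (x) P) o s_k live on the wrong space, so replace s_k by
   the simple function sigma_k on B_X x B_Z taking at t the value nearest to
   phi(t) among the finitely many values of (id (x) P) o s_k.  Then
   ||sigma_k(x, P y) - x (x) P y|| <= ||s_k(x, y) - x (x) y||, which gives the
   L^1 convergence of sigma_k to phi, and the integrals of sigma_k converge to
   (id (x) P) u = u. *)

From HB Require Import structures.
From mathcomp Require Import all_boot all_order all_algebra.
From mathcomp Require Import all_classical all_reals all_analysis.
From mathcomp Require Import ring lra measurable_realfun.
Import Order.TTheory GRing.Theory Num.Theory.
Import numFieldNormedType.Exports.
Local Open Scope classical_set_scope.
Local Open Scope ring_scope.
Set Implicit Arguments. Unset Strict Implicit. Unset Printing Implicit Defensive.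

Definition interleave {T : Type} (u v : nat -> T) : nat -> T :=
  fun n => if odd n then v n./2 else u n./2.

Section interleave.
Context {R : realType}.

Lemma series_interleave (u v : R ^nat) m :
  series (interleave u v) m = series u (uphalf m) + series v m./2.
Proof.
elim: m => [|m IH]; first by rewrite /series /= !big_geq // addr0.
rewrite seriesSr IH /interleave /=.
case: (boolP (odd m)) => om.
  by rewrite uphalf_half om /= add1n (seriesSr v); ring.
by rewrite uphalf_half (negbTE om) /= add0n (seriesSr u); ring.
Qed.

Lemma cvgn_half : (fun n => n./2) @ \oo --> \oo.
Proof.
apply/cvgnyPge => A; exists A.*2 => // n /= hn.
by rewrite -(doubleK A); apply: half_leq.
Qed.

Lemma cvgn_uphalf : (fun n => uphalf n) @ \oo --> \oo.
Proof.
apply/cvgnyPge => A; exists A.*2 => // n /= hn.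
rewrite uphalf_half; apply: leq_trans (leq_addl _ _).
by rewrite -(doubleK A); apply: half_leq.
Qed.

Lemma cvg_series_interleave (u v : R ^nat) a b :
  series u @ \oo --> a -> series v @ \oo --> b ->
  series (interleave u v) @ \oo --> a + b.
Proof.
move=> ha hb; rewrite (funext (series_interleave u v)).
by apply: cvgD; [exact: cvg_comp cvgn_uphalf ha | exact: cvg_comp cvgn_half hb].
Qed.

Lemma series_eventually0 (f : R ^nat) : (forall n, (0 < n)%N -> f n = 0) ->
  series f @ \oo --> f 0%N.
Proof.
move=> h; apply: cvg_near_cst; exists 1%N => // -[//|m] _ /=.
elim: m => [|m IH]; first by rewrite /series /= big_nat1.
by rewrite seriesSr IH (h m.+1) // addr0.
Qed.

End interleave.

Section bilinear.
Context {R : realType} {X Y : normedModType R}.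
Variable B : X -> Y -> R.
Hypothesis hB : bilin B.

Lemma bilin0l y : B 0 y = 0.
Proof. by have := hB.1 y 1 0 0; rewrite scale1r addr0 mul1r; lra. Qed.

Lemma bilinZl a x y : B (a *: x) y = a * B x y.
Proof. by have := hB.1 y a x 0; rewrite addr0 bilin0l addr0. Qed.

Lemma bilinBl x1 x2 y : B (x1 - x2) y = B x1 y - B x2 y.
Proof. by rewrite addrC -scaleN1r hB.1 mulN1r addrC. Qed.

Lemma bilinBr x y1 y2 : B x (y1 - y2) = B x y1 - B x y2.
Proof. by rewrite addrC -scaleN1r hB.2 mulN1r addrC. Qed.

End bilinear.

Section representations.
Context {R : realType} {X Y : normedModType R}.
Local Notation trep := (@trep R X Y).
Implicit Types (S : set Y) (r : trep) (B : X -> Y -> R).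

Definition rep_norm r n := `|(r n).1| * `|(r n).2|.
Definition rep_term B r n := B (r n).1 (r n).2.

Definition rep_merge r1 r2 : trep := interleave r1 r2.
Definition rep_scale (a : R) r : trep := fun n => (a *: (r n).1, (r n).2).
(* Padding with [(0, y)] rather than [(0, 0)] keeps every second factor in [S]
   without assuming [S 0]. *)
Definition rep_elem (x : X) (y : Y) : trep :=
  fun n => if n == 0%N then (x, y) else (0, y).
Definition rep_map (f : Y -> Y) r : trep := fun n => ((r n).1, f (r n).2).

Lemma rep_norm_ge0 r n : 0 <= rep_norm r n.
Proof. by rewrite mulr_ge0. Qed.

Lemma rep_cost_ge0 S r : rep_in S r -> 0 <= rep_cost r.
Proof.
move=> [_ hc]; apply: limr_ge => //; near=> n.
by rewrite /series /= sumr_ge0 // => i _; exact: rep_norm_ge0.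
Unshelve. all: by end_near. Qed.

Lemma bform_subset S1 S2 B : S1 `<=` S2 -> bform S2 B -> bform S1 B.
Proof. by move=> h [hb [C hC]]; split=> //; exists C => x y /h; exact: hC. Qed.

Lemma rep_in_subset S1 S2 r : S1 `<=` S2 -> rep_in S1 r -> rep_in S2 r.
Proof. by move=> h [h1 h2]; split=> // n; exact/h. Qed.

Lemma rep_term_cvg S B r : bform S B -> rep_in S r ->
  series (rep_term B r) @ \oo --> rep_ev B r.
Proof.
move=> [_ [C hC]] [hS hc].
suff : cvgn (series (rep_term B r)) by [].
apply/normed_cvg/(@series_le_cvg _ _ (fun n => `|C| * rep_norm r n)).
- by move=> n; rewrite /= normr_ge0.
- by move=> n; rewrite mulr_ge0 // rep_norm_ge0.
- move=> n /=; rewrite /rep_term /rep_norm (le_trans (hC _ _ (hS n))) //.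
  by rewrite -mulrA ler_wpM2r ?mulr_ge0 // ler_norm.
- by rewrite -/(`|C| *: rep_norm r); exact: is_cvg_seriesZ.
Qed.

Lemma rep_merge_term (f : X -> Y -> R) r1 r2 :
  (fun n => f (rep_merge r1 r2 n).1 (rep_merge r1 r2 n).2) =
  interleave (fun n => f (r1 n).1 (r1 n).2) (fun n => f (r2 n).1 (r2 n).2).
Proof. by apply/funext => n; rewrite /rep_merge /interleave; case: odd. Qed.

Lemma rep_in_merge S r1 r2 : rep_in S r1 -> rep_in S r2 -> rep_in S (rep_merge r1 r2).
Proof.
move=> [h1 c1] [h2 c2]; split; first by move=> n; rewrite /rep_merge /interleave; case: odd.
by rewrite (rep_merge_term (fun x y => `|x| * `|y|)); exact: cvgP (cvg_series_interleave c1 c2).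
Qed.

Lemma rep_cost_merge S r1 r2 : rep_in S r1 -> rep_in S r2 ->
  rep_cost (rep_merge r1 r2) = rep_cost r1 + rep_cost r2.
Proof.
move=> [_ c1] [_ c2]; apply: cvg_lim => //.
by rewrite (rep_merge_term (fun x y => `|x| * `|y|)); exact: cvg_series_interleave.
Qed.

Lemma rep_ev_merge S B r1 r2 : bform S B -> rep_in S r1 -> rep_in S r2 ->
  rep_ev B (rep_merge r1 r2) = rep_ev B r1 + rep_ev B r2.
Proof.
move=> hB h1 h2; apply: cvg_lim => //; rewrite (rep_merge_term B).
exact: cvg_series_interleave (rep_term_cvg hB h1) (rep_term_cvg hB h2).
Qed.

Lemma rep_scale_norm a r : rep_norm (rep_scale a r) = `|a| *: rep_norm r.
Proof. by apply/funext => n; rewrite /rep_scale /rep_norm /= normrZ -mulrA. Qed.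

Lemma rep_in_scale S a r : rep_in S r -> rep_in S (rep_scale a r).
Proof.
move=> [h1 c1]; split => //.
by rewrite -/(rep_norm (rep_scale a r)) rep_scale_norm; exact: is_cvg_seriesZ.
Qed.

Lemma rep_cost_scale S a r : rep_in S r -> rep_cost (rep_scale a r) = `|a| * rep_cost r.
Proof.
by move=> [_ c1]; rewrite /rep_cost -/(rep_norm (rep_scale a r)) rep_scale_norm lim_seriesZ.
Qed.

Lemma rep_ev_scale S B a r : bform S B -> rep_in S r ->
  rep_ev B (rep_scale a r) = a * rep_ev B r.
Proof.
move=> hB hr; rewrite /rep_ev.
have -> : (fun n => B (rep_scale a r n).1 (rep_scale a r n).2) = a *: rep_term B r.
  by apply/funext => n; rewrite /rep_scale /rep_term /= bilinZl //; case: hB.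
by rewrite lim_seriesZ //; exact: cvgP (rep_term_cvg hB hr).
Qed.

Lemma rep_in_elem S x y : S y -> rep_in S (rep_elem x y).
Proof.
move=> hy; split; first by move=> n; rewrite /rep_elem; case: (n == 0)%N.
by apply: cvgP (series_eventually0 _) => -[|n] // _; rewrite /rep_elem /= normr0 mul0r.
Qed.

Lemma rep_cost_elem x y : rep_cost (rep_elem x y) = `|x| * `|y|.
Proof.
apply: cvg_lim => //; apply: series_eventually0 => -[|n] // _.
by rewrite /rep_elem /= normr0 mul0r.
Qed.

Lemma rep_ev_elem B x y : bilin B -> rep_ev B (rep_elem x y) = B x y.
Proof.
move=> hB; apply: cvg_lim => //; apply: series_eventually0 => -[|n] // _.
by rewrite /rep_elem /= bilin0l.
Qed.

Section rep_map_lemmas.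
Variables (S1 S2 : set Y) (f : Y -> Y).
Hypotheses (f_in : forall y, S2 (f y)) (f_le : forall y, `|f y| <= `|y|).

Lemma rep_in_map r : rep_in S1 r -> rep_in S2 (rep_map f r).
Proof.
move=> [_ c1]; split; first by move=> n; exact: f_in.
apply: (@series_le_cvg _ _ (rep_norm r)) c1 => n.
- by rewrite mulr_ge0.
- exact: rep_norm_ge0.
- by rewrite /rep_map /rep_norm /= ler_wpM2l.
Qed.

Lemma rep_cost_map r : rep_in S1 r -> rep_cost (rep_map f r) <= rep_cost r.
Proof.
move=> hr; have [_ c2] := rep_in_map hr; have [_ c1] := hr.
by apply: lim_series_le => // n; rewrite /rep_map /= ler_wpM2l.
Qed.

End rep_map_lemmas.
End representations.

Section tensor_operations.
Context {R : realType} {X Y : normedModType R}.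
Local Notation Fn := ((X -> Y -> R) -> R).
Local Notation trep := (@trep R X Y).
Implicit Types (S : set Y) (r : trep) (F G : Fn) (B : X -> Y -> R).

Definition tadd F G : Fn := fun B => F B + G B.
Definition tscale (a : R) F : Fn := fun B => a * F B.
Definition tsub F G : Fn := fun B => F B - G B.
Definition telem (x : X) (y : Y) : Fn := fun B => B x y.
Definition tmap (f : Y -> Y) F : Fn := fun B => F (fun x y => B x (f y)).

Definition tens_eq S F G := forall B, bform S B -> F B = G B.

Lemma represents_eq S r F G : tens_eq S F G -> represents S r F -> represents S r G.
Proof. by move=> h [h1 h2]; split=> // B hB; rewrite h2 // h. Qed.

Lemma is_tensor_eq S F G : tens_eq S F G -> is_tensor S F -> is_tensor S G.
Proof. by move=> h [r hr]; exists r; exact: represents_eq hr. Qed.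

Lemma tnorm_eq S F G : tens_eq S F G -> tnorm S F = tnorm S G.
Proof.
move=> h; rewrite /tnorm; congr (inf [set _ | _ in _]).
by apply/seteqP; split => r; apply: represents_eq => // B hB; rewrite h.
Qed.

Lemma tnorm_has_lbound S F : has_lbound (rep_cost @` [set r | represents S r F]).
Proof. by exists 0 => _ [r [hr _] <-]; exact: rep_cost_ge0 hr. Qed.

Lemma tnorm_ge0 S F : 0 <= tnorm S F.
Proof.
have [[r hr]|nF] := pselect (is_tensor S F).
  apply: lb_le_inf; first by exists (rep_cost r), r.
  by move=> _ [r' [hr' _] <-]; exact: rep_cost_ge0 hr'.
rewrite /tnorm; suff -> : rep_cost @` [set r | represents S r F] = set0 by rewrite inf0.
by apply/seteqP; split => // c [r hr _]; apply: nF; exists r.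
Qed.

Lemma tnorm_le_cost S r F : represents S r F -> tnorm S F <= rep_cost r.
Proof. by move=> hr; apply: (ge_inf (tnorm_has_lbound S F)); exists r. Qed.

Lemma tnorm_approx S F e : is_tensor S F -> 0 < e ->
  exists2 r, represents S r F & rep_cost r < tnorm S F + e.
Proof.
move=> [r hr] e0.
have hi : has_inf (rep_cost @` [set r | represents S r F]).
  by split; [exists (rep_cost r), r | exact: tnorm_has_lbound].
by have [_ [r' hr' <-] h] := inf_adherent e0 hi; exists r'.
Qed.

Lemma represents_add S r1 r2 F G : represents S r1 F -> represents S r2 G ->
  represents S (rep_merge r1 r2) (tadd F G).
Proof.
move=> [i1 e1] [i2 e2]; split; first exact: rep_in_merge.
by move=> B hB; rewrite (rep_ev_merge hB i1 i2) e1 // e2.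
Qed.

Lemma represents_scale S a r F : represents S r F ->
  represents S (rep_scale a r) (tscale a F).
Proof.
move=> [i1 e1]; split; first exact: rep_in_scale.
by move=> B hB; rewrite (rep_ev_scale a hB i1) e1.
Qed.

Lemma represents_elem S x y : S y -> represents S (rep_elem x y) (telem x y).
Proof.
move=> hy; split; first exact: rep_in_elem.
by move=> B [hB _]; rewrite rep_ev_elem.
Qed.

Lemma is_tensor_rep S r : rep_in S r -> is_tensor S (tens_of r).
Proof. by move=> hr; exists r; split. Qed.

Lemma is_tensor_add S F G : is_tensor S F -> is_tensor S G -> is_tensor S (tadd F G).
Proof. by move=> [r1 h1] [r2 h2]; exists (rep_merge r1 r2); exact: represents_add. Qed.

Lemma is_tensor_scale S a F : is_tensor S F -> is_tensor S (tscale a F).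
Proof. by move=> [r1 h1]; exists (rep_scale a r1); exact: represents_scale. Qed.

Lemma is_tensor_elem S x y : S y -> is_tensor S (telem x y).
Proof. by move=> hy; exists (rep_elem x y); exact: represents_elem. Qed.

Lemma is_tensor0 S : S 0 -> is_tensor S (fun _ : X -> Y -> R => 0).
Proof.
by move=> S0; apply: is_tensor_eq (is_tensor_elem 0 S0) => B [hB _]; rewrite /telem bilin0l.
Qed.

Lemma is_tensor_sub S F G : is_tensor S F -> is_tensor S G -> is_tensor S (tsub F G).
Proof.
move=> hF hG; apply: is_tensor_eq (is_tensor_add hF (is_tensor_scale (-1) hG)) => B _.
by rewrite /tadd /tscale /tsub mulN1r.
Qed.

Lemma tnorm_add_le S F G : is_tensor S F -> is_tensor S G ->
  tnorm S (tadd F G) <= tnorm S F + tnorm S G.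
Proof.
move=> hF hG; apply/ler_addgt0Pr => e e0.
have e20 : 0 < e / 2 by rewrite divr_gt0.
have [r1 h1 c1] := tnorm_approx hF e20.
have [r2 h2 c2] := tnorm_approx hG e20.
apply: le_trans (tnorm_le_cost (represents_add h1 h2)) _.
rewrite (rep_cost_merge h1.1 h2.1); lra.
Qed.

Lemma tnorm_scale_le S a F : is_tensor S F -> tnorm S (tscale a F) <= `|a| * tnorm S F.
Proof.
move=> hF; apply/ler_addgt0Pr => e e0.
have a1 : 0 < `|a| + 1 by rewrite ltr_wpDl.
have [r h c] := tnorm_approx hF (divr_gt0 e0 a1).
apply: le_trans (tnorm_le_cost (represents_scale a h)) _.
rewrite (rep_cost_scale a h.1).
have ae : `|a| * (e / (`|a| + 1)) <= e by rewrite mulrA ler_pdivrMr //; nra.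
have : `|a| * rep_cost r <= `|a| * (tnorm S F + e / (`|a| + 1)).
  by rewrite ler_wpM2l // ltW.
rewrite mulrDr; lra.
Qed.

Lemma tnorm_elem_le S x y : S y -> tnorm S (telem x y) <= `|x| * `|y|.
Proof. by move=> hy; rewrite -rep_cost_elem; exact/tnorm_le_cost/represents_elem. Qed.

Lemma tnorm_subC S F G : is_tensor S F -> is_tensor S G ->
  tnorm S (tsub G F) = tnorm S (tsub F G).
Proof.
have le F' G' : is_tensor S F' -> is_tensor S G' ->
    tnorm S (tsub G' F') <= tnorm S (tsub F' G').
  move=> hF hG; rewrite (@tnorm_eq S _ (tscale (-1) (tsub F' G'))); last first.
    by move=> B _; rewrite /tscale /tsub; ring.
  by apply: le_trans (tnorm_scale_le _ (is_tensor_sub hF hG)) _; rewrite normrN1 mul1r.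
by move=> hF hG; apply/eqP; rewrite eq_le !le.
Qed.

Lemma dist_tnorm_le S F G : is_tensor S F -> is_tensor S G ->
  `|tnorm S F - tnorm S G| <= tnorm S (tsub F G).
Proof.
have tri F' G' : is_tensor S F' -> is_tensor S G' ->
    tnorm S F' <= tnorm S G' + tnorm S (tsub F' G').
  move=> hF hG; rewrite (@tnorm_eq S F' (tadd G' (tsub F' G'))); last first.
    by move=> B _; rewrite /tadd /tsub; ring.
  exact: tnorm_add_le hG (is_tensor_sub hF hG).
move=> hF hG; have := tri _ _ hF hG; have := tri _ _ hG hF.
rewrite (tnorm_subC hF hG) ler_norml; lra.
Qed.

Section tmap_lemmas.
Variables (S1 S2 : set Y) (f : Y -> Y).
Hypotheses (f_bform : forall B, bform S2 B -> bform S1 (fun x y => B x (f y)))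
  (f_in : forall y, S2 (f y)) (f_le : forall y, `|f y| <= `|y|).

Lemma represents_map r F : represents S1 r F -> represents S2 (rep_map f r) (tmap f F).
Proof.
move=> [i1 e1]; split; first exact: rep_in_map i1.
by move=> B bB; rewrite /tmap -e1 //; exact: f_bform.
Qed.

Lemma is_tensor_map F : is_tensor S1 F -> is_tensor S2 (tmap f F).
Proof. by move=> [r hr]; exists (rep_map f r); exact: represents_map. Qed.

Lemma tnorm_map_le F : is_tensor S1 F -> tnorm S2 (tmap f F) <= tnorm S1 F.
Proof.
move=> hF; apply/ler_addgt0Pr => e e0.
have [r h c] := tnorm_approx hF e0.
apply: le_trans (tnorm_le_cost (represents_map h)) _.
have := rep_cost_map f_in f_le h.1; lra.
Qed.

End tmap_lemmas.
End tensor_operations.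

Section subspace.
Context {R : realType} {X Y : normedModType R}.
Local Notation Fn := ((X -> Y -> R) -> R).
Local Notation trep := (@trep R X Y).
Implicit Types (S : set Y) (r : trep) (F : Fn) (B : X -> Y -> R).

Lemma represents_subset S1 S2 r F : S1 `<=` S2 -> represents S1 r F -> represents S2 r F.
Proof.
move=> h [hr hF]; split; first exact: rep_in_subset hr.
by move=> B hB; apply/hF/(bform_subset h).
Qed.

Lemma is_tensor_subset S1 S2 F : S1 `<=` S2 -> is_tensor S1 F -> is_tensor S2 F.
Proof. by move=> h [r hr]; exists r; exact: represents_subset hr. Qed.

Lemma tens_eq_subset S1 S2 F G : S1 `<=` S2 -> tens_eq S1 F G -> tens_eq S2 F G.
Proof. by move=> h e B /(bform_subset h) /e. Qed.

Lemma tnorm_subset_le S1 S2 F : S1 `<=` S2 -> is_tensor S1 F -> tnorm S2 F <= tnorm S1 F.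
Proof.
move=> h [r hr]; apply: lb_le_inf; first by exists (rep_cost r), r.
by move=> _ [r' hr' <-]; exact/tnorm_le_cost/(represents_subset h).
Qed.

Variables (Z : set Y) (P : {linear Y -> Y}).
Hypotheses (P_le : forall y, `|P y| <= `|y|) (P_in : forall y, Z (P y))
  (P_id : forall z, Z z -> P z = z).

Lemma bform_comp S1 S2 B : (forall y, S1 y -> S2 (P y)) -> bform S2 B ->
  bform S1 (fun x y => B x (P y)).
Proof.
move=> hS [[h1 h2] [C hC]]; split.
  by split=> [y a x1 x2 | x a y1 y2]; rewrite ?linearP ?h1 ?h2.
exists `|C| => x y /hS /(hC x) /le_trans; apply; rewrite -!mulrA.
apply: le_trans (ler_wpM2r (mulr_ge0 (normr_ge0 x) (normr_ge0 (P y))) (ler_norm C)) _.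
by rewrite ler_wpM2l // ler_wpM2l.
Qed.

Lemma bform_compT B : bform setT B -> bform setT (fun x y => B x (P y)).
Proof. exact: bform_comp. Qed.

Lemma rep_map_id r : rep_in Z r -> rep_map P r = r.
Proof. by move=> [hr _]; apply/funext => n; rewrite /rep_map P_id //; case: (r n). Qed.

Lemma tmap_tens_of r : rep_in Z r -> tmap P (tens_of r) = tens_of r.
Proof.
move=> hr; apply/funext => B.
by change (rep_ev B (rep_map P r) = rep_ev B r); rewrite rep_map_id.
Qed.

Lemma tmap_id F : is_tensor Z F -> tens_eq Z (tmap P F) F.
Proof.
move=> [r [hr hF]] B hB.
have hPB : bform Z (fun x y => B x (P y)) by apply: bform_comp hB => y _.
rewrite /tmap -(hF _ hB) -(hF _ hPB).
by change (tmap P (tens_of r) B = tens_of r B); rewrite tmap_tens_of.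
Qed.

Lemma tnorm_subspace F : is_tensor Z F -> tnorm setT F = tnorm Z F.
Proof.
move=> hF; apply/eqP; rewrite eq_le tnorm_subset_le //=.
rewrite -(tnorm_eq (tmap_id hF)).
apply: tnorm_map_le => //; last exact: is_tensor_subset hF.
by move=> B hB; apply: bform_comp hB.
Qed.

End subspace.

Section borel.
Context {R : realType} {X Y : normedModType R}.
Local Notation Fn := ((X -> Y -> R) -> R).
Local Notation BT := (g_sigma_algebraType (@open (X * Y)%type)).
Implicit Types (S : set Y) (w : Fn).

Lemma tnorm_elem_sub_le (x x' : X) (y y' : Y) :
  tnorm setT (tsub (telem x' y') (telem x y)) <= `|x' - x| * `|y'| + `|x| * `|y' - y|.
Proof.
rewrite (@tnorm_eq R X Y setT _ (tadd (telem (x' - x) y') (telem x (y' - y)))); last first.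
  by move=> B [hB _]; rewrite /tsub /tadd /telem bilinBl // bilinBr //; ring.
have := tnorm_add_le (is_tensor_elem (x' - x) (I : setT y'))
  (is_tensor_elem x (I : setT (y' - y))).
move/le_trans; apply.
by apply: lerD; exact: tnorm_elem_le.
Qed.

Lemma continuous_tnorm_sub_elem w : is_tensor setT w ->
  continuous (fun t : X * Y => tnorm setT (tsub w (telem t.1 t.2))).
Proof.
move=> hw t.
have hG (t' : X * Y) : is_tensor setT (tsub w (telem t'.1 t'.2)).
  exact: is_tensor_sub hw (is_tensor_elem _ (I : setT t'.2)).
have g0 : (fun t' : X * Y => `|t'.1 - t.1| * `|t'.2| + `|t.1| * `|t'.2 - t.2|) @ t --> 0.
  have n1 : (fun t' : X * Y => `|t'.1 - t.1|) @ t --> 0.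
    have : (fun t' : X * Y => t'.1 - t.1) @ t --> (0 : X).
      by rewrite -(subrr t.1); apply: cvgB; [exact: cvg_fst | exact: cvg_cst].
    by move/cvg_norm; rewrite normr0.
  have n2 : (fun t' : X * Y => `|t'.2 - t.2|) @ t --> 0.
    have : (fun t' : X * Y => t'.2 - t.2) @ t --> (0 : Y).
      by rewrite -(subrr t.2); apply: cvgB; [exact: cvg_snd | exact: cvg_cst].
    by move/cvg_norm; rewrite normr0.
  have n3 : (fun t' : X * Y => `|t'.2|) @ t --> `|t.2| by apply: cvg_norm; exact: cvg_snd.
  have := cvgD (cvgM n1 n3) (cvgM (cvg_cst `|t.1|) n2).
  by rewrite mul0r mulr0 addr0; apply.
apply/cvgrPdist_le => e e0; near=> t'.
apply: le_trans (dist_tnorm_le (hG t) (hG t')) _.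
rewrite (@tnorm_eq R X Y setT _ (tsub (telem t'.1 t'.2) (telem t.1 t.2))); last first.
  by move=> B _; rewrite /tsub; ring.
apply: le_trans (tnorm_elem_sub_le _ _ _ _) _.
rewrite -[X in X <= _]ger0_norm ?addr_ge0 ?mulr_ge0 //.
by near: t'; move/cvgr0Pnorm_le: g0; apply.
Unshelve. all: by end_near. Qed.

Lemma continuous_measurable_borel (f : X * Y -> R) : continuous f ->
  measurable_fun (setT : set BT) f.
Proof.
move=> cf; apply: (@measurability _ _ BT R setT f _ (RGenOpens.measurableE R)).
move=> _ [_ [a [b ->]] <-].
apply: sub_sigma_algebra; rewrite setTI.
by move/continuousP: cf; apply; exact: interval_open.
Qed.

Lemma closed_measurable (A : set (X * Y)) : closed A -> measurable (A : set BT).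
Proof.
move=> cA; rewrite -(setCK A); apply: measurableC.
by apply: sub_sigma_algebra; exact: closed_openC.
Qed.

Lemma measurable_ballD S : closed S -> measurable (ballD S : set BT).
Proof.
move=> cS; apply: closed_measurable.
have -> : (ballD S : set (X * Y)) = ((fun p : X * Y => `|p.1|) @^-1` [set x | x <= 1])
   `&` (((fun p : X * Y => `|p.2|) @^-1` [set x | x <= 1]) `&` (snd @^-1` S)).
  by apply/seteqP; split => p.
have c1 : continuous (fst : X * Y -> X) by move=> p; exact: cvg_fst.
have c2 : continuous (snd : X * Y -> Y) by move=> p; exact: cvg_snd.
apply: closedI; last apply: closedI.
- apply: (continuous_closedP _).1; last exact: closed_le.
  by move=> p; apply: continuous_comp; [exact: c1 | exact: norm_continuous].
- apply: (continuous_closedP _).1; last exact: closed_le.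
  by move=> p; apply: continuous_comp; [exact: c2 | exact: norm_continuous].
- exact: (continuous_closedP _).1.
Qed.

End borel.

Section simple_functions.
Context {R : realType} {X Y : normedModType R}.
Local Notation Fn := ((X -> Y -> R) -> R).
Local Notation trep := (@trep R X Y).
Local Notation BT := (g_sigma_algebraType (@open (X * Y)%type)).
Local Notation simple := (seq (set BT * trep)).
Implicit Types (S : set Y) (s : simple) (w : Fn).

Lemma simple_ok_cons S c s : simple_ok S (c :: s) ->
  (measurable c.1 /\ rep_in S c.2) /\ simple_ok S s.
Proof.
move=> hs; split; first by apply: hs; rewrite inE eqxx.
by move=> c' hc'; apply: hs; rewrite inE hc' orbT.
Qed.

Lemma simple_ok_subset S1 S2 s : S1 `<=` S2 -> simple_ok S1 s -> simple_ok S2 s.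
Proof. by move=> h hs c /hs[mc hc]; split => //; exact: rep_in_subset hc. Qed.

Lemma is_tensor_sum S s (f : set BT * trep -> R) : S 0 -> simple_ok S s ->
  is_tensor S (fun B => \sum_(c <- s) f c * rep_ev B c.2).
Proof.
move=> S0; elim: s => [_|c s IH /simple_ok_cons[[_ hc] hs]].
  by apply: is_tensor_eq (is_tensor0 S0) => B _; rewrite big_nil.
apply: is_tensor_eq (is_tensor_add (is_tensor_scale (f c) (is_tensor_rep hc)) (IH hs)).
by move=> B _; rewrite big_cons.
Qed.

Lemma is_tensor_sf_val S s t : S 0 -> simple_ok S s -> is_tensor S (sf_val s t).
Proof. exact: is_tensor_sum. Qed.

Lemma is_tensor_sf_int S mu s : S 0 -> simple_ok S s -> is_tensor S (sf_int mu s).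
Proof. exact: is_tensor_sum. Qed.

Lemma measurable_sf_comp (h : Fn -> BT -> R) s w :
  (forall w, is_tensor setT w -> measurable_fun setT (h w)) ->
  simple_ok setT s -> is_tensor setT w ->
  measurable_fun setT (fun t => h (tadd w (sf_val s t)) t).
Proof.
move=> mh; elim: s w => [|c s IH] w hs hw.
  apply: eq_measurable_fun (mh _ hw) => t _; congr (h _ t).
  by apply/funext => B; rewrite /tadd /sf_val big_nil addr0.
have [[mc hc] hs'] := simple_ok_cons hs.
have hwc : is_tensor setT (tadd w (tens_of c.2)) by exact/is_tensor_add/is_tensor_rep.
apply: (eq_measurable_fun (fun t => if t \in c.1
    then h (tadd (tadd w (tens_of c.2)) (sf_val s t)) t
    else h (tadd w (sf_val s t)) t)).
  move=> t _; case: ifPn => ht; congr (h _ t); apply/funext => B;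
  rewrite /tadd /tens_of /sf_val big_cons indicE; [rewrite ht | rewrite (negbTE ht)] => /=; ring.
apply: (measurable_fun_ifT (f := fun t : BT => t \in c.1)); [|exact: IH|exact: IH].
by apply: (measurable_fun_bool true); rewrite setTI preimage_mem_true.
Qed.

Lemma measurable_tnorm_sf s w : simple_ok setT s -> is_tensor setT w ->
  measurable_fun setT (fun t : BT => tnorm setT (tadd w (sf_val s t))).
Proof.
by move=> hs hw; apply: (measurable_sf_comp (h := fun (w : Fn) (_ : BT) => tnorm setT w)).
Qed.

Lemma measurable_sf_dist s : simple_ok setT s ->
  measurable_fun setT (fun t : BT => tnorm setT (tsub (sf_val s t) (elem t))).
Proof.
move=> hs; apply: (eq_measurable_fun (fun t =>
    tnorm setT (tsub (tadd (fun=> 0) (sf_val s t)) (telem t.1 t.2)))).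
  by move=> t _; congr tnorm; apply/funext => B; rewrite /tsub /tadd add0r.
apply: (measurable_sf_comp (h := fun w (t : BT) => tnorm setT (tsub w (telem t.1 t.2)))) => //.
  by move=> w hw; apply: continuous_measurable_borel; exact: continuous_tnorm_sub_elem.
exact: is_tensor0.
Qed.

End simple_functions.

Section finite_pushforward.
Context d d' (T : measurableType d) (T' : measurableType d') (R : realType).
Variables (mu : {finite_measure set T -> \bar R}) (f : {mfun T >-> T'}).

Definition finite_pushforward := pushforward mu f.

Let measurable_preimage (A : set T') : measurable A -> measurable (f @^-1` A).
Proof. by move=> mA; rewrite -[X in measurable X]setTI; exact: measurable_funP. Qed.

Let finite_pushforward0 : finite_pushforward set0 = 0%E.
Proof. by rewrite /finite_pushforward /pushforward preimage_set0 measure0. Qed.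

Let finite_pushforward_ge0 A : (0 <= finite_pushforward A)%E.
Proof. exact: measure_ge0. Qed.

Let finite_pushforward_sigma_additive : semi_sigma_additive finite_pushforward.
Proof.
move=> F mF tF mUF; rewrite /finite_pushforward /pushforward preimage_bigcup.
apply: measure_semi_sigma_additive.
- by move=> n; exact: measurable_preimage.
- apply/trivIsetP => /= i j _ _ ij; rewrite -preimage_setI.
  by move/trivIsetP : tF => /(_ _ _ _ _ ij) ->//; rewrite preimage_set0.
- by rewrite -preimage_bigcup; exact: measurable_preimage.
Qed.

HB.instance Definition _ := isMeasure.Build _ _ _ finite_pushforward
  finite_pushforward0 finite_pushforward_ge0 finite_pushforward_sigma_additive.

Let finite_pushforward_fin : fin_num_fun finite_pushforward.
Proof.
move=> A mA; rewrite /finite_pushforward /pushforward fin_num_measure //.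
exact: measurable_preimage.
Qed.

HB.instance Definition _ := Measure_isFinite.Build _ _ _ finite_pushforward
  finite_pushforward_fin.

End finite_pushforward.

Section conull.
Context d (T : measurableType d) (R : realType) (mu : {measure set T -> \bar R}).
Local Open Scope ereal_scope.

Lemma ge0_integral_conull (D1 D2 : set T) (f : T -> \bar R) :
  measurable D1 -> measurable D2 -> D1 `<=` D2 -> mu (~` D1) = 0 ->
  measurable_fun D2 f -> (forall x, D2 x -> 0 <= f x) ->
  \int[mu]_(x in D2) f x = \int[mu]_(x in D1) f x.
Proof.
move=> m1 m2 D12 null1 mf f0.
rewrite (ge0_negligible_integral _ _ _ _ null1) //; last exact: measurableC.
by rewrite setDE setCK; congr integral; apply/setIidr.
Qed.

Lemma measureI_conull (D E : set T) : measurable D -> measurable E ->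
  mu (~` D) = 0 -> mu (E `&` D) = mu E.
Proof.
move=> mD mE null; rewrite [RHS](measureDI mu mE mD).
rewrite -[LHS]add0e; congr (_ + _); apply/esym/eqP.
rewrite eq_le measure_ge0 andbT -null.
by apply: le_measure; rewrite ?inE; [exact: measurableD | exact: measurableC | move=> x []].
Qed.

End conull.

Section simple_integral.
Context {R : realType} {X Y : normedModType R}.
Local Notation Fn := ((X -> Y -> R) -> R).
Local Notation trep := (@trep R X Y).
Local Notation BT := (g_sigma_algebraType (@open (X * Y)%type)).
Local Notation simple := (seq (set BT * trep)).
Implicit Types (S : set Y) (s a b : simple) (w : Fn) (D E A : set BT).
Variable mu : {finite_measure set BT -> \bar R}.

Definition sf_int_on D w s : Fn :=
  fun B => fine (mu D) * w B + \sum_(c <- s) fine (mu (c.1 `&` D)) * rep_ev B c.2.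

Lemma fine_measure_split E A : measurable E -> measurable A ->
  fine (mu E) = fine (mu (E `&` A)) + fine (mu (E `&` ~` A)).
Proof.
move=> mE mA.
have mEA : measurable (E `&` A) by exact: measurableI.
have mEnA : measurable (E `&` ~` A) by apply: measurableI => //; exact: measurableC.
by rewrite (measureDI mu mE mA) setDE fineD ?fin_num_measure // addrC.
Qed.

Lemma sf_int_on_cons D w c s : measurable D -> simple_ok setT (c :: s) ->
  sf_int_on D w (c :: s) =
  tadd (sf_int_on (D `&` c.1) (tadd w (tens_of c.2)) s) (sf_int_on (D `&` ~` c.1) w s).
Proof.
move=> mD /simple_ok_cons[[mc _] hs]; apply/funext => B.
rewrite /sf_int_on /tadd /tens_of big_cons (fine_measure_split mD mc) (setIC c.1 D).
have -> : \sum_(c' <- s) fine (mu (c'.1 `&` D)) * rep_ev B c'.2 =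
    \sum_(c' <- s) fine (mu (c'.1 `&` (D `&` c.1))) * rep_ev B c'.2 +
    \sum_(c' <- s) fine (mu (c'.1 `&` (D `&` ~` c.1))) * rep_ev B c'.2.
  rewrite -big_split /=; apply: eq_big_seq => c' /hs[mc' _].
  by rewrite (fine_measure_split (measurableI _ _ mc' mD) mc) !setIA -mulrDl.
ring.
Qed.

Lemma is_tensor_sf_int_on D w s : is_tensor setT w -> simple_ok setT s ->
  is_tensor setT (sf_int_on D w s).
Proof.
move=> hw hs; apply: is_tensor_add (is_tensor_scale _ hw) _.
exact: (is_tensor_sum (fun c : set BT * trep => fine (mu (c.1 `&` D)))) (I : setT 0) hs.
Qed.

Lemma tnorm_sf_int_on_le D w s : measurable D -> is_tensor setT w -> simple_ok setT s ->
  ((tnorm setT (sf_int_on D w s))%:E <=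
   \int[mu]_(t in D) (tnorm setT (tadd w (sf_val s t)))%:E)%E.
Proof.
elim: s w D => [|c s IH] w D mD hw hs.
  have -> : sf_int_on D w [::] = tscale (fine (mu D)) w.
    by apply/funext => B; rewrite /sf_int_on big_nil addr0.
  rewrite (eq_integral (fun=> (tnorm setT w)%:E)); last first.
    move=> t _; congr (EFin (tnorm _ _)); apply/funext => B.
    by rewrite /tadd /sf_val big_nil addr0.
  rewrite integral_cst // -[X in (_ <= _ * X)%E](fineK (@fin_num_measure _ _ _ mu D mD)).
  rewrite -EFinM lee_fin.
  apply: le_trans (tnorm_scale_le _ hw) _.
  by rewrite ger0_norm ?fine_ge0 ?measure_ge0 // mulrC.
have [[mc hc] hs'] := simple_ok_cons hs.
have hwc : is_tensor setT (tadd w (tens_of c.2)) by exact/is_tensor_add/is_tensor_rep.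
have mDc : measurable (D `&` c.1) by exact: measurableI.
have mDnc : measurable (D `&` ~` c.1) by apply: measurableI => //; exact: measurableC.
rewrite sf_int_on_cons //.
apply: le_trans (_ : (tnorm setT (sf_int_on (D `&` c.1) (tadd w (tens_of c.2)) s) +
    tnorm setT (sf_int_on (D `&` ~` c.1) w s))%:E <= _)%E.
  by rewrite lee_fin; apply: tnorm_add_le; exact: is_tensor_sf_int_on.
have hD : D = (D `&` c.1) `|` (D `&` ~` c.1) by rewrite -setDE setUIDK.
rewrite [X in (_ <= \int[mu]_(t in X) _)%E]hD ge0_integral_setU //; first last.
- by rewrite /disj_set setIACA setICr setI0.
- by move=> t _; rewrite lee_fin tnorm_ge0.
- rewrite -hD; apply/measurable_EFinP/(measurable_funS measurableT) => //.
  exact: measurable_tnorm_sf.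
rewrite EFinD; apply: leeD.
  rewrite (eq_integral (fun t => (tnorm setT (tadd (tadd w (tens_of c.2)) (sf_val s t)))%:E)).
    exact: IH.
  move=> t /[1!inE] -[_ ct]; congr (EFin (tnorm _ _)); apply/funext => B.
  by rewrite /tadd /tens_of /sf_val big_cons indicE mem_set //= mul1r addrA.
rewrite (eq_integral (fun t => (tnorm setT (tadd w (sf_val s t)))%:E)); first exact: IH.
move=> t /[1!inE] -[_ nct]; congr (EFin (tnorm _ _)); apply/funext => B.
by rewrite /tadd /sf_val big_cons indicE memNset //= mul0r add0r.
Qed.

Definition sf_neg b : simple := [seq (c.1, rep_scale (-1) c.2) | c <- b].

Lemma simple_ok_cat_neg S a b : simple_ok S a -> simple_ok S b ->
  simple_ok S (a ++ sf_neg b).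
Proof.
move=> ha hb c; rewrite mem_cat => /orP[/ha //|/mapP[c' /hb[mc' hc'] ->]].
by split => //; exact: rep_in_scale.
Qed.

Lemma sum_cat_neg S a b (f : set BT -> R) B : bform S B -> simple_ok S b ->
  \sum_(c <- a ++ sf_neg b) f c.1 * rep_ev B c.2 =
  \sum_(c <- a) f c.1 * rep_ev B c.2 - \sum_(c <- b) f c.1 * rep_ev B c.2.
Proof.
move=> hB hb; rewrite big_cat big_map /= -sumrN; congr (_ + _).
by apply: eq_big_seq => c /hb[_ hc]; rewrite (rep_ev_scale _ hB hc); ring.
Qed.

Lemma sf_val_cat_neg a b t : simple_ok setT b ->
  tens_eq setT (sf_val (a ++ sf_neg b) t) (tsub (sf_val a t) (sf_val b t)).
Proof. by move=> hb B hB; rewrite /sf_val (sum_cat_neg _ (fun A => \1_A t) hB hb). Qed.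

Lemma measurable_tnorm_sf_sub a b : simple_ok setT a -> simple_ok setT b ->
  measurable_fun setT (fun t : BT => tnorm setT (tsub (sf_val a t) (sf_val b t))).
Proof.
move=> ha hb; apply: (eq_measurable_fun
    (fun t => tnorm setT (tadd (fun=> 0) (sf_val (a ++ sf_neg b) t)))).
  move=> t _; apply: tnorm_eq => B hB.
  by rewrite /tadd add0r (sf_val_cat_neg _ _ hb).
by apply: measurable_tnorm_sf; [exact: simple_ok_cat_neg | exact: is_tensor0].
Qed.

Lemma tnorm_sf_int_sub_le D a b : measurable D -> mu (~` D) = 0%E ->
  simple_ok setT a -> simple_ok setT b ->
  ((tnorm setT (tsub (sf_int mu a) (sf_int mu b)))%:E <=
   \int[mu]_(t in D) (tnorm setT (tsub (sf_val a t) (sf_val b t)))%:E)%E.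
Proof.
move=> mD null ha hb.
have hab := simple_ok_cat_neg ha hb.
rewrite (@tnorm_eq R X Y setT _ (sf_int_on D (fun=> 0) (a ++ sf_neg b))); last first.
  move=> B hB; rewrite /sf_int_on mulr0 add0r.
  rewrite (sum_cat_neg _ (fun A => fine (mu (A `&` D))) hB hb) /tsub /sf_int.
  congr (_ - _); apply: eq_big_seq => c.
    by move=> /ha[mc _]; rewrite measureI_conull.
  by move=> /hb[mc _]; rewrite measureI_conull.
apply: le_trans (tnorm_sf_int_on_le mD (is_tensor0 (I : setT 0)) hab) _.
rewrite le_eqVlt; apply/orP; left; apply/eqP/eq_integral => t _; congr EFin.
by apply: tnorm_eq => B hB; rewrite /tadd add0r (sf_val_cat_neg _ _ hb).
Qed.

End simple_integral.

Lemma exists_first_argmin {R : realType} (f : nat -> R) n : (0 < n)%N ->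
  exists i, [/\ (i < n)%N, forall j, (j < n)%N -> f i <= f j &
    forall j, (j < i)%N -> f i < f j].
Proof.
case: n => // n _.
pose p i := (i < n.+1)%N && `[< forall j, (j < n.+1)%N -> f i <= f j >].
have hp : exists i, p i.
  case: (@arg_minP _ _ _ ord0 predT (fun i : 'I_n.+1 => f i)) => // i _ imin.
  by exists i; rewrite /p ltn_ord; apply/asboolP => j jn; exact: (imin (Ordinal jn)).
case: (ex_minnP hp) => i /andP[hi /asboolP imin] ifirst.
exists i; split => // j ji; rewrite ltNge; apply/negP => fij.
have : p j by rewrite /p (ltn_trans ji hi); apply/asboolP => k /imin /(le_trans fij).
by move/ifirst; rewrite leqNgt ji.
Qed.

Section measurable_comparison.
Context d (T : measurableType d) (R : realType) (f g : T -> R).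
Hypotheses (mf : measurable_fun setT f) (mg : measurable_fun setT g).

Lemma measurable_set_ltr : measurable [set t | f t < g t].
Proof.
have := @measurable_lte _ T R setT measurableT (fun t => (f t)%:E) (fun t => (g t)%:E).
by rewrite setTI; apply; apply/measurable_EFinP.
Qed.

Lemma measurable_set_ler : measurable [set t | f t <= g t].
Proof.
have := @measurable_lee _ T R setT measurableT (fun t => (f t)%:E) (fun t => (g t)%:E).
by rewrite setTI; apply; apply/measurable_EFinP.
Qed.

End measurable_comparison.

Section nearest_value.
Context {R : realType} {X Y : normedModType R}.
Local Notation trep := (@trep R X Y).
Local Notation BT := (g_sigma_algebraType (@open (X * Y)%type)).
Local Notation simple := (seq (set BT * trep)).
Implicit Types (S : set Y) (s : simple) (W : seq trep) (w : trep).

Definition rep0 : trep := rep_elem 0 0.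

Fixpoint sf_values s : seq trep :=
  if s is c :: s' then sf_values s' ++ map (rep_merge c.2) (sf_values s') else [:: rep0].

Lemma sf_values_in S s : S 0 -> simple_ok S s -> forall w, w \in sf_values s -> rep_in S w.
Proof.
move=> S0; elim: s => [_ w|c s IH /simple_ok_cons[[_ hc] hs] w] /=.
  by rewrite inE => /eqP ->; exact: rep_in_elem.
rewrite mem_cat => /orP[/(IH hs)//|/mapP[w' hw' ->]].
exact: rep_in_merge hc (IH hs _ hw').
Qed.

Lemma size_sf_values_gt0 s : (0 < size (sf_values s))%N.
Proof. by elim: s => [//|c s IH] /=; rewrite size_cat addn_gt0 IH. Qed.

Lemma sf_valuesP s t : simple_ok setT s ->
  exists2 w, w \in sf_values s & tens_eq setT (tens_of w) (sf_val s t).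
Proof.
elim: s => [_|c s IH /simple_ok_cons[[_ hc] hs]].
  exists rep0; first by rewrite inE.
  by move=> B [hB _]; rewrite /tens_of rep_ev_elem // bilin0l // /sf_val big_nil.
have [w hw hwe] := IH hs.
have hwin := sf_values_in (I : setT 0) hs hw.
case: (boolP (t \in c.1)) => ht.
  exists (rep_merge c.2 w); first by rewrite /= mem_cat map_f ?orbT.
  move=> B hB; rewrite /tens_of (rep_ev_merge hB hc hwin) -[rep_ev B w]/(tens_of w B).
  by rewrite hwe // /sf_val big_cons indicE ht mul1r.
exists w; first by rewrite /= mem_cat hw.
by move=> B hB; rewrite hwe // /sf_val big_cons indicE (negbTE ht) mul0r add0r.
Qed.

Definition rep_dist w (t : X * Y) : R := tnorm setT (tsub (tens_of w) (telem t.1 t.2)).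

Lemma measurable_rep_dist w : rep_in setT w -> measurable_fun (setT : set BT) (rep_dist w).
Proof.
move=> hw; apply: continuous_measurable_borel.
by apply: continuous_tnorm_sub_elem; exact: is_tensor_rep.
Qed.

(* Ties go to the smallest index, so that the cells are disjoint. *)
Definition nearest_cell W i : set BT :=
  \bigcap_(j in [set j | (j < size W)%N])
     [set t | rep_dist (nth rep0 W i) t <= rep_dist (nth rep0 W j) t] `&`
  \bigcap_(j in [set j | (j < i)%N])
     [set t | rep_dist (nth rep0 W i) t < rep_dist (nth rep0 W j) t].

Definition nearest_sf W : simple :=
  [seq (nearest_cell W i, nth rep0 W i) | i <- iota 0 (size W)].

Lemma rep_in_nth W j : (forall w, w \in W -> rep_in setT w) -> rep_in setT (nth rep0 W j).
Proof.
move=> hW; case: (ltnP j (size W)) => hj; first exact/hW/mem_nth.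
by rewrite nth_default //; exact: rep_in_elem.
Qed.

Lemma measurable_nearest_cell W i : (forall w, w \in W -> rep_in setT w) ->
  measurable (nearest_cell W i).
Proof.
move=> hW; have md j := measurable_rep_dist (rep_in_nth j hW).
by apply: measurableI; apply: bigcap_measurableType => j _;
  [exact: measurable_set_ler | exact: measurable_set_ltr].
Qed.

Lemma nearest_cell_cover W t : (0 < size W)%N ->
  exists2 i, (i < size W)%N & nearest_cell W i t.
Proof.
move=> hW.
have [i [hi imin ifirst]] := exists_first_argmin (fun j => rep_dist (nth rep0 W j) t) hW.
by exists i.
Qed.

Lemma nearest_cell_uniq W t i j : nearest_cell W i t -> nearest_cell W j t ->
  (i < size W)%N -> (j < size W)%N -> i = j.
Proof.
move=> [imin ifirst] [jmin jfirst] hi hj; apply/eqP; case: (ltngtP i j) => // ij.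
  by have /= := jfirst _ ij; rewrite ltNge imin.
by have /= := ifirst _ ij; rewrite ltNge jmin.
Qed.

Lemma sf_val_nearest W t i : (i < size W)%N -> nearest_cell W i t ->
  sf_val (nearest_sf W) t = tens_of (nth rep0 W i).
Proof.
move=> hi hc; apply/funext => B; rewrite /sf_val big_map.
rewrite (bigD1_seq i) ?mem_iota ?iota_uniq //= indicE mem_set // mul1r.
rewrite big1_seq ?addr0 // => j /andP[ji]; rewrite mem_iota add0n => /andP[_ hj].
rewrite indicE; case: (boolP (t \in nearest_cell W j)) => [/set_mem htj|]; last by rewrite mul0r.
by move: ji; rewrite (nearest_cell_uniq htj hc hj hi) eqxx.
Qed.

Lemma simple_ok_nearest W : (forall w, w \in W -> rep_in setT w) ->
  simple_ok setT (nearest_sf W).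
Proof.
move=> hW c /mapP[i _ ->]; split; first exact: measurable_nearest_cell.
exact: rep_in_nth.
Qed.

End nearest_value.

Lemma squeeze_cvgn0 {R : realType} (c : R) (u b : R ^nat) (a : (\bar R) ^nat) :
  (forall k, 0 <= u k) -> (forall k, ((u k)%:E <= c%:E * a k + (b k)%:E)%E) ->
  a @ \oo --> 0%E -> b @ \oo --> 0 -> u @ \oo --> 0.
Proof.
move=> u0 uab a0 b0.
have bE : (fun k => (b k)%:E) @ \oo --> 0%E by apply/fine_cvgP; split => //; near=> k.
have ab0 : (fun k => c%:E * a k + (b k)%:E)%E @ \oo --> 0%E.
  rewrite -[0%E]adde0; apply: cvgeD => //.
  by rewrite -(mule0 c%:E); exact: cvgeZl.
have /fine_cvgP[] // : (fun k => (u k)%:E) @ \oo --> 0%E.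
apply: (squeeze_cvge _ (cvg_cst 0%E) ab0).
by near=> k; rewrite lee_fin u0 uab.
Unshelve. all: by end_near. Qed.

Section projection.
Context {R : realType} {X Y : normedModType R}.
Local Notation Fn := ((X -> Y -> R) -> R).
Local Notation trep := (@trep R X Y).
Local Notation BT := (g_sigma_algebraType (@open (X * Y)%type)).
Local Notation simple := (seq (set BT * trep)).
Implicit Types (s : simple) (F : Fn).
Variables (Z : set Y) (P : {linear Y -> Y}).
Hypotheses (Z_closed : closed Z) (P_le : forall y, `|P y| <= `|y|)
  (P_in : forall y, Z (P y)) (P_id : forall z, Z z -> P z = z).

Let Z0 : Z 0. Proof. by rewrite -(linear0 P). Qed.

Definition idxP (t : BT) : BT := ((t.1, P t.2) : X * Y).

Lemma continuous_idxP : continuous (idxP : X * Y -> X * Y).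
Proof.
have cP : continuous P.
  move=> y; apply/cvgrPdist_lt => e e0; near=> y'.
  rewrite -linearB; apply: le_lt_trans (P_le _) _.
  by near: y'; apply: cvgr_dist_lt.
move=> t; apply: cvg_pair; first exact: cvg_fst.
by apply: continuous_comp; [exact: cvg_snd | exact: cP].
Unshelve. all: by end_near. Qed.

Lemma measurable_idxP : measurable_fun (setT : set BT) idxP.
Proof.
apply: (@measurability _ _ BT BT setT idxP (@open (X * Y)%type)) => //.
move=> _ [A oA <-]; apply: sub_sigma_algebra; rewrite setTI.
by move/continuousP: continuous_idxP; apply.
Qed.

Definition idxP_mfun : {mfun BT >-> BT} :=
  HB.pack idxP (isMeasurableFun.Build _ _ BT BT idxP measurable_idxP).

Lemma idxP_ballD t : ballD setT t -> ballD Z (idxP t).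
Proof.
by move=> [t1 [t2 _]]; split => //; split; [exact: le_trans (P_le _) t2 | exact: P_in].
Qed.

Lemma is_tensor_mapP F : is_tensor setT F -> is_tensor setT (tmap P F).
Proof. by move=> hF; apply: (is_tensor_map (bform_compT P_le)) hF. Qed.

Lemma tnorm_mapP_le F : is_tensor setT F -> tnorm setT (tmap P F) <= tnorm setT F.
Proof. by move=> hF; apply: (tnorm_map_le (bform_compT P_le)) hF. Qed.

Definition sf_pullback (f : BT -> BT) s : simple := [seq (f @^-1` c.1, c.2) | c <- s].
Definition sf_mapP s : simple := [seq (c.1, rep_map P c.2) | c <- s].
Definition sf_proj s : simple := nearest_sf (map (rep_map P) (sf_values s)).

Lemma sf_val_pullback f s t : sf_val (sf_pullback f s) t = sf_val s (f t).
Proof.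
apply/funext => B; rewrite /sf_val big_map; apply: eq_bigr => c _.
by rewrite !indicE; congr (_%:R * _); apply/idP/idP; rewrite !inE.
Qed.

Lemma sf_int_pullback (mu : {finite_measure set BT -> \bar R}) (f : {mfun BT >-> BT}) s :
  sf_int (finite_pushforward mu f) s = sf_int mu (sf_pullback f s).
Proof. by apply/funext => B; rewrite /sf_int big_map. Qed.

Lemma sf_val_mapP s t : sf_val (sf_mapP s) t = tmap P (sf_val s t).
Proof. by apply/funext => B; rewrite /sf_val big_map. Qed.

Lemma sf_int_mapP mu s : sf_int mu (sf_mapP s) = tmap P (sf_int mu s).
Proof. by apply/funext => B; rewrite /sf_int big_map. Qed.

Lemma simple_ok_mapP s : simple_ok setT s -> simple_ok setT (sf_mapP s).
Proof.
move=> hs c /mapP[c' /hs[mc' hc'] ->]; split => //=.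
by apply: rep_in_map hc'.
Qed.

Lemma rep_in_sf_values_mapP s : simple_ok setT s ->
  forall w, w \in map (rep_map P) (sf_values s) -> rep_in setT w.
Proof.
move=> hs w /mapP[w' hw' ->].
by apply: rep_in_map (sf_values_in (I : setT 0) hs hw').
Qed.

Lemma simple_ok_proj s : simple_ok setT s -> simple_ok Z (sf_proj s).
Proof.
move=> hs c hc; have [mc _] := simple_ok_nearest (rep_in_sf_values_mapP hs) hc.
split => //; move: hc => /mapP[i]; rewrite mem_iota add0n size_map => /andP[_ hi] -> /=.
rewrite (nth_map rep0) //; apply: (rep_in_map (S1 := setT) P_in P_le).
exact: (sf_values_in (I : setT 0) hs) _ (mem_nth rep0 hi).
Qed.

Lemma simple_ok_projT s : simple_ok setT s -> simple_ok setT (sf_proj s).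
Proof. by move=> hs; apply: simple_ok_subset (simple_ok_proj hs). Qed.

Lemma simple_ok_pullback_proj s : simple_ok setT s ->
  simple_ok setT (sf_pullback idxP (sf_proj s)).
Proof.
move=> hs c /mapP[c' /(simple_ok_projT hs)[mc' hc'] ->]; split => //=.
by rewrite -[X in measurable X]setTI; apply: measurable_idxP.
Qed.

Lemma tnorm_sf_dist_subspace s t : simple_ok Z s -> Z t.2 ->
  tnorm setT (tsub (sf_val s t) (elem t)) = tnorm Z (tsub (sf_val s t) (elem t)).
Proof.
move=> hs ht; apply: (tnorm_subspace P_le P_in P_id).
exact: is_tensor_sub (is_tensor_sf_val _ Z0 hs) (is_tensor_elem _ ht).
Qed.

(* The value of [sf_proj s] at [idxP t] is the candidate nearest to
   [phi (idxP t)]; [(id (x) P) (s t)] is one of the candidates. *)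
Lemma tnorm_sf_proj_le s t : simple_ok setT s ->
  tnorm setT (tsub (sf_val (sf_proj s) (idxP t)) (elem (idxP t))) <=
  tnorm setT (tsub (sf_val s t) (elem t)).
Proof.
move=> hs; set W := map (rep_map P) (sf_values s).
have W0 : (0 < size W)%N by rewrite size_map size_sf_values_gt0.
have [i hi hci] := nearest_cell_cover (idxP t) W0.
rewrite /sf_proj -/W (sf_val_nearest hi hci).
have [w hw hwe] := sf_valuesP t hs.
rewrite -(@tnorm_eq R X Y setT (tsub (tens_of w) (telem t.1 t.2))
    (tsub (sf_val s t) (elem t))); last by move=> B hB; rewrite /tsub hwe.
have hj : (index w (sf_values s) < size W)%N by rewrite size_map index_mem.
apply: le_trans (hci.1 _ hj) _.
rewrite (nth_map rep0) ?index_mem // nth_index //.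
apply: tnorm_mapP_le.
exact: is_tensor_sub (is_tensor_rep (sf_values_in (I : setT 0) hs hw)) (is_tensor_elem _ I).
Qed.

Lemma tnorm_pullback_sub_mapP_le s t : simple_ok setT s ->
  tnorm setT (tsub (sf_val (sf_pullback idxP (sf_proj s)) t) (sf_val (sf_mapP s) t)) <=
  2 * tnorm setT (tsub (sf_val s t) (elem t)).
Proof.
move=> hs; rewrite sf_val_pullback sf_val_mapP.
have hst := is_tensor_sf_val t (I : setT 0) hs.
have ht := is_tensor_elem t.1 (I : setT t.2).
have hA : is_tensor setT (tsub (sf_val (sf_proj s) (idxP t)) (elem (idxP t))).
  apply: is_tensor_sub (is_tensor_sf_val _ (I : setT 0) (simple_ok_projT hs)) _.
  exact: is_tensor_elem.
have hPB := is_tensor_mapP (is_tensor_sub ht hst).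
rewrite (@tnorm_eq R X Y setT _ (tadd (tsub (sf_val (sf_proj s) (idxP t)) (elem (idxP t)))
    (tmap P (tsub (elem t) (sf_val s t))))); last first.
  by move=> B _; rewrite /tadd /tsub /tmap /elem; ring.
apply: le_trans (tnorm_add_le hA hPB) _.
rewrite mulr_natl mulr2n lerD ?tnorm_sf_proj_le //.
apply: le_trans (tnorm_mapP_le (is_tensor_sub ht hst)) _.
by rewrite (tnorm_subC hst ht).
Qed.

Section pushforward.
Variable mu : {finite_measure set BT -> \bar R}.
Hypothesis mu_ballD : mu (~` ballD setT) = 0%E.
Local Notation nu := (finite_pushforward mu idxP_mfun).

Lemma pushforward_ballD : nu (~` ballD Z) = 0%E.
Proof.
apply: subset_measure0 mu_ballD => //=.
- rewrite -[X in measurable X]setTI; apply: measurable_idxP => //.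
  by apply: measurableC; exact: measurable_ballD.
- by apply: measurableC; apply: measurable_ballD; exact: closedT.
- by move=> t /= nZ hT; apply/nZ/idxP_ballD.
Qed.

Lemma tnorm_int_proj_sub_le s F : simple_ok setT s -> is_tensor Z F ->
  ((tnorm setT (tsub (sf_int nu (sf_proj s)) F))%:E <=
   2%:E * \int[mu]_(t in ballD setT) (tnorm setT (tsub (sf_val s t) (elem t)))%:E +
   (tnorm setT (tsub (sf_int mu s) F))%:E)%E.
Proof.
move=> hs hF; rewrite sf_int_pullback.
have hpb := simple_ok_pullback_proj hs; have hmP := simple_ok_mapP hs.
have hFT : is_tensor setT F by exact: is_tensor_subset hF.
have hsF : is_tensor setT (tsub (sf_int mu s) F).
  exact: is_tensor_sub (is_tensor_sf_int _ (I : setT 0) hs) hFT.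
have PF := tens_eq_subset (@subsetT _ Z) (tmap_id P_le P_in P_id hF).
rewrite (@tnorm_eq R X Y setT _ (tadd
    (tsub (sf_int mu (sf_pullback idxP (sf_proj s))) (sf_int mu (sf_mapP s)))
    (tmap P (tsub (sf_int mu s) F)))); last first.
  by move=> B hB; rewrite /tadd /tsub /tmap sf_int_mapP -[F B](PF B hB); rewrite /tmap; ring.
apply: le_trans (_ : (_ + _)%:E <= _)%E.
  by rewrite lee_fin; apply: tnorm_add_le; [apply: is_tensor_sub; exact: is_tensor_sf_int
    | exact: is_tensor_mapP].
have mB : measurable (ballD setT : set BT) by apply: measurable_ballD; exact: closedT.
rewrite EFinD; apply: leeD; last first.
  by rewrite lee_fin; exact: tnorm_mapP_le.
apply: le_trans (tnorm_sf_int_sub_le mB mu_ballD hpb hmP) _.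
rewrite -ge0_integralZl //; last 2 first.
- by apply/measurable_EFinP/(measurable_funS measurableT) => //; exact: measurable_sf_dist.
- by move=> t _; rewrite lee_fin tnorm_ge0.
apply: ge0_le_integral => //.
- by move=> t _; rewrite lee_fin tnorm_ge0.
- apply/measurable_EFinP/(measurable_funS measurableT) => //.
  exact: measurable_tnorm_sf_sub.
- apply/measurable_EFinP/(measurable_funS measurableT) => //.
  by apply: measurable_funM => //; exact: measurable_sf_dist.
- by move=> t _; rewrite -EFinM lee_fin; exact: tnorm_pullback_sub_mapP_le.
Qed.

Lemma integral_proj_le s : simple_ok setT s ->
  (\int[nu]_(t in ballD Z) (tnorm Z (tsub (sf_val (sf_proj s) t) (elem t)))%:E <=
   \int[mu]_(t in ballD setT) (tnorm setT (tsub (sf_val s t) (elem t)))%:E)%E.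
Proof.
move=> hs; set f := fun t : BT => (tnorm setT (tsub (sf_val (sf_proj s) t) (elem t)))%:E.
have mf : measurable_fun setT f.
  by apply/measurable_EFinP; exact: measurable_sf_dist (simple_ok_projT hs).
have mfP : measurable_fun setT (f \o idxP) by exact: measurableT_comp mf measurable_idxP.
have f0 t : (0 <= f t)%E by rewrite lee_fin tnorm_ge0.
have mBZ : measurable (ballD Z : set BT) by exact: measurable_ballD.
have mBT : measurable (ballD setT : set BT) by apply: measurable_ballD; exact: closedT.
rewrite (eq_integral f); last first.
  by move=> t /[1!inE] -[_ [_ ht]]; rewrite /f (tnorm_sf_dist_subspace (simple_ok_proj hs) ht).
apply: le_trans (ge0_subset_integral _ mBZ measurableT mf _ (@subsetT _ _)) _ => //.
rewrite ge0_integral_pushforward // preimage_setT.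
rewrite (ge0_integral_conull mBT measurableT (@subsetT _ _) mu_ballD mfP (fun t _ => f0 _)).
apply: ge0_le_integral => //.
- by move=> t _; exact: f0.
- exact: measurable_funS measurableT (@subsetT _ _) mfP.
- apply/measurable_EFinP/(measurable_funS measurableT) => //.
  exact: measurable_sf_dist.
- by move=> t _; rewrite lee_fin; exact: tnorm_sf_proj_le.
Qed.

Lemma bochner_int_proj F : is_tensor Z F -> bochner_int setT mu F -> bochner_int Z nu F.
Proof.
move=> hF [s [hs [_ [hi hc]]]].
exists (fun k => sf_proj (s k)); split; [|split; [|split]].
- by move=> k; exact: simple_ok_proj.
- move=> k; apply: (eq_measurable_fun
      (fun t => tnorm setT (tsub (sf_val (sf_proj (s k)) t) (elem t)))).
    move=> t /[1!inE] -[_ [_ ht]].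
    by rewrite (tnorm_sf_dist_subspace (simple_ok_proj (hs k)) ht).
  apply: (measurable_funS measurableT) => //.
  exact: measurable_sf_dist (simple_ok_projT (hs k)).
- apply: (squeeze_cvge _ (cvg_cst 0%E) hi); near=> k; apply/andP; split.
    by apply: integral_ge0 => t _; rewrite lee_fin tnorm_ge0.
  exact: integral_proj_le.
- apply: (squeeze_cvgn0 (c := 2) _ _ hi hc) => [k|k]; first exact: tnorm_ge0.
  rewrite -(tnorm_subspace P_le P_in P_id); last first.
    exact: is_tensor_sub (is_tensor_sf_int _ Z0 (simple_ok_proj _)) hF.
  exact: tnorm_int_proj_sub_le.
Unshelve. all: by end_near. Qed.

End pushforward.

Lemma INA_subspace_of_INA F : is_tensor Z F -> INA setT F -> INA Z F.
Proof.
move=> hF [_ [mu [mu_ballD [mu_setT hmu]]]]; split => //.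
exists (finite_pushforward mu idxP_mfun); split; [exact: pushforward_ballD|split].
- rewrite /= /finite_pushforward /pushforward preimage_setT mu_setT.
  by rewrite (tnorm_subspace P_le P_in P_id hF).
- exact: bochner_int_proj.
Qed.

Lemma bochner_int_of_subspace (mu : {finite_measure set BT -> \bar R}) F :
  mu (~` ballD Z) = 0%E -> is_tensor Z F -> bochner_int Z mu F -> bochner_int setT mu F.
Proof.
move=> mu_ballD hF [s [hs [hm [hi hc]]]].
have mBZ : measurable (ballD Z : set BT) by exact: measurable_ballD.
have mBT : measurable (ballD setT : set BT) by apply: measurable_ballD; exact: closedT.
have hsT k : simple_ok setT (s k) by exact: simple_ok_subset (hs k).
exists s; split; [exact: hsT|split; [|split]].
- move=> k; apply: (measurable_funS measurableT) => //.
  exact: measurable_sf_dist (hsT k).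
- apply: cvg_trans hi; apply: near_eq_cvg; near=> k.
  rewrite (ge0_integral_conull mBZ mBT _ mu_ballD); first last.
  + by move=> t _; rewrite lee_fin tnorm_ge0.
  + apply/measurable_EFinP/(measurable_funS measurableT) => //.
    exact: measurable_sf_dist (hsT k).
  + by move=> t [? []].
  apply: eq_integral => t /[1!inE] -[_ [_ ht]].
  by rewrite (tnorm_sf_dist_subspace (hs k) ht).
- apply: cvg_trans hc; apply: near_eq_cvg; near=> k.
  have hZ := is_tensor_sub (is_tensor_sf_int mu Z0 (hs k)) hF.
  by rewrite (tnorm_subspace P_le P_in P_id hZ).
Unshelve. all: by end_near. Qed.

Lemma INA_of_INA_subspace F : INA Z F -> INA setT F.
Proof.
move=> [hF [mu [mu_ballD [mu_setT hmu]]]].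
split; first exact: is_tensor_subset hF.
exists mu; split; [|split].
- have mT : measurable (~` ballD setT : set BT).
    by apply: measurableC; apply: measurable_ballD; exact: closedT.
  have mZ : measurable (~` ballD Z : set BT) by apply: measurableC; exact: measurable_ballD.
  by apply: (subset_measure0 mT mZ _ mu_ballD) => t nT [t1 [t2 _]]; apply: nT.
- by rewrite mu_setT (tnorm_subspace P_le P_in P_id hF).
- exact: bochner_int_of_subspace.
Qed.

End projection.

Theorem lemma2p9 (R : realType) (X Y : completeNormedModType R)
    (Z : set Y) (P : {linear Y -> Y})
    (Z0 : Z 0) (Zlin : forall (a : R) y1 y2, Z y1 -> Z y2 -> Z (a *: y1 + y2))
    (Zcl : closed Z)
    (Prange : forall y, Z (P y)) (Pid : forall z, Z z -> P z = z)
    (Pnorm_le : forall y, `|P y| <= `|y|)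
    (Pnorm_sup : forall e : R, 0 < e -> exists y, `|y| <= 1 /\ 1 - e < `|P y|) :
  forall r : @trep R X Y, rep_in Z r ->
    (INA setT (tens_of r) <-> INA Z (tens_of r)).
Proof.
(* [Z0] is implied by [Prange]. *)
move=> r hr; split.
- exact: INA_subspace_of_INA Zcl Pnorm_le Prange Pid _ (is_tensor_rep hr).
- exact: INA_of_INA_subspace Zcl Pnorm_le Prange Pid _.
Qed.
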